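(* Let $k$ be a field of characteristic $p>0$, let $k'/k$ be a purely inseparable finite field extension of degree $q$ with $k$-basis $\{1=\alpha_1,\alpha_2,\dots,\alpha_q\}$, let $C=\mathrm{R}_{k'/k}(\mathbb{G}_m)$, embedded in affine $q$-space $\mathbb{A}_q$ via coordinates with respect to this basis, and let $U$ be the unipotent radical of $C_{\bar k}$. Let $A$ be a $\bar k$-algebra and $a=(a_1,\dots,a_q)\in C_{\bar k}(A)\subseteq\mathbb{A}_q(A)$. Then $a\in U(A)$ if and only if $a_1=1-\sum_{2\le i\le q}a_i\alpha_i$.
   Context: Here a point $a=(a_1,\dots,a_q)$ of $C_{\bar k}(A)$ corresponds to the unit $\sum_i\alpha_i\otimes a_i\in k'\otimes_k A$, and $\alpha_i\in k'\subseteq\bar k$. *)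

From HB Require Import structures.
From mathcomp Require Import all_boot all_order all_algebra.
From mathcomp Require Import mpoly.
Set Implicit Arguments. Unset Strict Implicit. Unset Printing Implicit Defensive.
Import Order.TTheory GRing.Theory.
Local Open Scope ring_scope.

(* Setting: F = k, L = kbar (algebraically closed, algebraic over iota(F)),
   alpha : 'I_q -> L the k-basis 1 = alpha_1, ..., alpha_q of k' (viewed inside
   kbar), c i j l the structure constants alpha_i alpha_j = sum_l c_ijl alpha_l. *)

Section Defs.
Variables (F : fieldType) (L : closedFieldType) (iota : {rmorphism F -> L}).
Variables (q : nat) (alpha : 'I_q -> L) (c : 'I_q -> 'I_q -> 'I_q -> F).

Definition in_kprime (x : L) : Prop :=
  exists b : 'I_q -> F, x = \sum_i iota (b i) * alpha i.

Definition alpha_free : Prop :=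
  forall b : 'I_q -> F, \sum_i iota (b i) * alpha i = 0 -> forall i, b i = 0.

Definition struct_consts : Prop :=
  forall i j, alpha i * alpha j = \sum_l iota (c i j l) * alpha l.

Definition purely_insep (p : nat) : Prop :=
  forall x, in_kprime x -> exists n : nat, exists y : F, x ^+ (p ^ n) = iota y.

Definition algebraic_over : Prop :=
  forall x : L, exists2 P : {poly F}, P != 0 & root (map_poly iota P) x.

(* k' (x) A, for a kbar-algebra A, written in coordinates w.r.t. the basis
   alpha_i (x) 1: a point a : 'I_q -> A stands for sum_i alpha_i (x) a_i. *)
Section Tensor.
Variable A : comAlgType L.

Definition tmul (a b : 'I_q -> A) : 'I_q -> A :=
  fun l => \sum_i \sum_j a i * b j * (iota (c i j l))%:A.

(* the unit 1 = alpha_1 (x) 1; i0 is the index of alpha_1 *)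
Definition tone (i0 : 'I_q) : 'I_q -> A := fun l => if l == i0 then 1 else 0.

(* C_kbar(A) = (k' (x)_k A)^x, C = R_{k'/k}(G_m) *)
Definition C_pts (i0 : 'I_q) (a : 'I_q -> A) : Prop :=
  exists b : 'I_q -> A, tmul a b = tone i0.
End Tensor.

(* matrix of multiplication by a in k' (x) kbar w.r.t. the basis alpha_i (x) 1
   (the regular representation C_kbar -> GL_q) *)
Definition mulmx_of (a : 'I_q -> L) : 'M[L]_q :=
  \matrix_(l, j) \sum_i a i * iota (c i j l).

Definition unipotent_pt (a : 'I_q -> L) : Prop :=
  exists m : nat, (mulmx_of a - 1%:M) ^+ m = 0.

(* Unipotent radical U of the commutative smooth connected group C_kbar:
   its kbar-points are the unipotent elements of C(kbar); as U is smooth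
   (reduced) it is the reduced closed subscheme of A_q with these points,
   i.e. cut out by the ideal of polynomials vanishing on them. *)
Definition U_ideal (i0 : 'I_q) (f : {mpoly L[q]}) : Prop :=
  forall x : 'I_q -> L, C_pts (A := L^o) i0 x -> unipotent_pt x -> f.@[x] = 0.

Definition U_pts (A : comAlgType L) (i0 : 'I_q) (a : 'I_q -> A) : Prop :=
  C_pts i0 a /\
  forall f : {mpoly L[q]}, U_ideal i0 f -> mmap (fun z : L => z%:A) a f = 0.

End Defs.

(* Write [M x] for the matrix of multiplication by [sum_i alpha_i (x) x_i] on
   [k' (x) kbar] and [s x = sum_i x_i alpha_i] for its image under the
   multiplication map [k' (x) kbar -> kbar].  The row [(alpha_j)_j] is a left
   eigenvector of every [M x] with eigenvalue [s x], so unipotent points have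
   [s x = 1].  Conversely, if [s x = 1] then [M x - 1 = sum_i d_i M alpha_i] with
   [sum_i d_i alpha_i = 0]; the [M alpha_i] commute and a single power [p^e]
   sends every [alpha_i] into [k], so [(M x - 1)^(p^e)] is the scalar
   [(sum_i d_i alpha_i)^(p^e) = 0].  Thus the kbar-points of [U] are exactly
   those of the affine hyperplane [s x = 1] (which are automatically units);
   as [kbar] is infinite, a polynomial vanishing there vanishes after
   substituting the hyperplane's parametrisation, hence at its points with
   values in any kbar-algebra. *)

From HB Require Import structures.
From mathcomp Require Import all_boot all_order all_algebra.
From mathcomp Require Import mpoly.
From Stdlib Require Import FunctionalExtensionality.
Set Implicit Arguments. Unset Strict Implicit. Unset Printing Implicit Defensive.
Import GRing.Theory.
Local Open Scope ring_scope.

Lemma mpoly_rmorph_eq (R S : nzRingType) (n : nat)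
    (g1 g2 : {rmorphism {mpoly R[n]} -> S}) :
  (forall c, g1 c%:MP = g2 c%:MP) -> (forall i, g1 'X_i = g2 'X_i) -> g1 =1 g2.
Proof.
move=> eqC eqX; elim/mpolyind => [|c m p _ _ IH]; first by rewrite !raddf0.
rewrite !raddfD /= IH -mul_mpolyC !rmorphM /= eqC mpolyXE_id !rmorph_prod /=.
by congr (_ * _ + _); apply: eq_bigr => i _; rewrite !rmorphXn /= eqX.
Qed.

Lemma mmap_eq (R S : nzRingType) (n : nat) (f : R -> S) (h1 h2 : 'I_n -> S)
    (p : {mpoly R[n]}) :
  h1 =1 h2 -> mmap f h1 p = mmap f h2 p.
Proof. by move=> eq_h; apply: eq_bigr => m _; rewrite (mmap1_eq _ eq_h). Qed.

Lemma mmap_sum_XC (R S : comNzRingType) (g : {rmorphism R -> S}) (n : nat)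
    (P : pred 'I_n) (beta : 'I_n -> R) (y : 'I_n -> S) :
  mmap g y (\sum_(i | P i) 'X_i * (beta i)%:MP) = \sum_(i | P i) y i * g (beta i).
Proof.
by rewrite rmorph_sum; apply: eq_bigr => i _; rewrite rmorphM /= mmapX mmap1U mmapC.
Qed.

Lemma mmap_comp_mpoly (R S : comNzRingType) (g : {rmorphism R -> S}) (n k : nat)
    (T : n.-tuple {mpoly R[k]}) (a : 'I_k -> S) (f : {mpoly R[n]}) :
  mmap g a (f \mPo T) = mmap g (fun i => mmap g a (tnth T i)) f.
Proof.
apply: (mpoly_rmorph_eq (g1 := mmap g a \o comp_mpoly T)) => [c|i] /=.
  by rewrite comp_mpolyC !mmapC.
by rewrite comp_mpolyXU -tnth_nth mmapX mmap1U.
Qed.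

Lemma mwidenXU (R : nzRingType) (n : nat) (i : 'I_n) :
  mwiden 'X_i = 'X_(widen_ord (leqnSn n) i) :> {mpoly R[n.+1]}.
Proof. by rewrite mwidenX mnmwiden1. Qed.

Section Muni.
Variables (R : comNzRingType) (n : nat).
Local Notation widen := (widen_ord (leqnSn n)).

Lemma meval_muni (w : 'I_n.+1 -> R) (p : {mpoly R[n.+1]}) :
  p.@[w] = (map_poly (meval (w \o widen)) (muni p)).[w ord_max].
Proof.
pose g := horner_eval (w ord_max) \o map_poly (meval (w \o widen)) \o @muni n R.
suff /(_ p) : meval w =1 g by [].
apply: mpoly_rmorph_eq => [c|i] /=.
  by rewrite muniC map_polyC /horner_eval hornerC /= !mevalC.
rewrite mevalXU /muni mmapX mmap1U /horner_eval.
case: splitP => [j Hj | k Hk].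
  by rewrite map_polyC hornerC /= mevalXU; congr w; apply: val_inj; rewrite /= -Hj.
rewrite map_polyX hornerX; congr w; apply: val_inj.
by move: Hk; rewrite /= (ord1 k) addn0.
Qed.

Lemma muniK (p : {mpoly R[n.+1]}) : (map_poly (@mwiden n R) (muni p)).['X_ord_max] = p.
Proof.
pose g := horner_eval 'X_ord_max \o map_poly (@mwiden n R) \o @muni n R.
suff /(_ p) : g =1 idfun by [].
apply: mpoly_rmorph_eq => [c|i] /=.
  by rewrite muniC map_polyC /horner_eval hornerC /= mwidenC.
rewrite /muni mmapX mmap1U /horner_eval.
case: splitP => [j Hj | k Hk].
  by rewrite map_polyC hornerC /= mwidenXU; congr 'X__; apply: val_inj; rewrite /= -Hj.
rewrite map_polyX hornerX; congr 'X__; apply: val_inj.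
by move: Hk; rewrite /= (ord1 k) addn0.
Qed.

End Muni.

Lemma mpoly_eq0_of_meval (R : comNzRingType)
    (nonroot : forall Q : {poly R}, Q != 0 -> exists x, ~~ root Q x) :
  forall n (p : {mpoly R[n]}), (forall v, p.@[v] = 0) -> p = 0.
Proof.
have poly_eq0 (Q : {poly R}) : (forall t, Q.[t] = 0) -> Q = 0.
  by move=> HQ; apply/eqP; apply: contraT => /nonroot[t]; rewrite /root HQ eqxx.
elim=> [|n IH] p Hp.
  rewrite (nvar0_mpolyC p) -(mevalC (fun _ : 'I_0 => 0) p@_0%MM) -nvar0_mpolyC.
  by rewrite Hp mpolyC0.
suff muni_p : muni p = 0 by rewrite -[p]muniK muni_p rmorph0 horner0.
apply/polyP => k; rewrite coef0; apply: IH => v.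
pose w t i := oapp v t (unlift ord_max i).
have wv t : w t \o widen_ord (leqnSn n) =1 v.
  move=> j; rewrite /w /= (_ : widen_ord _ j = lift ord_max j) ?liftK //.
  by apply: val_inj; rewrite /= /bump leqNgt ltn_ord.
suff muni_v : map_poly (meval v) (muni p) = 0.
  by have := congr1 (fun Q : {poly R} => Q`_k) muni_v; rewrite /= coef_map coef0.
apply: poly_eq0 => t; have := Hp (w t); rewrite meval_muni /w unlift_none /=.
by rewrite (eq_map_poly (fun q => meval_eq q (wv t))).
Qed.

Lemma hyperplane_pivotE (R : nzRingType) (n : nat) (i0 : 'I_n) (beta y : 'I_n -> R) :
  beta i0 = 1 ->
  (\sum_i y i * beta i = 1) <-> (y i0 = 1 - \sum_(i | i != i0) y i * beta i).
Proof.
move=> beta1; rewrite (bigD1 i0) //= beta1 mulr1.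
by split=> [<- | ->]; [rewrite addrK | rewrite subrK].
Qed.

Section Hyperplane.
Variables (R : comNzRingType) (n : nat) (i0 : 'I_n) (beta : 'I_n -> R).

Definition hyperplane_subst : n.-tuple {mpoly R[n]} :=
  [tuple if i == i0 then 1 - \sum_(j | j != i0) 'X_j * (beta j)%:MP else 'X_i | i < n].

Lemma mmap_hyperplane_subst (S : comNzRingType) (g : {rmorphism R -> S})
    (y : 'I_n -> S) (i : 'I_n) :
  mmap g y (tnth hyperplane_subst i)
  = if i == i0 then 1 - \sum_(j | j != i0) y j * g (beta j) else y i.
Proof.
rewrite tnth_mktuple; case: eqP => _; last by rewrite mmapX mmap1U.
by rewrite rmorphB rmorph1 /= mmap_sum_XC.
Qed.

Lemma mmap_eq0_on_hyperplane
    (nonroot : forall Q : {poly R}, Q != 0 -> exists x, ~~ root Q x)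
    (f : {mpoly R[n]}) :
  (forall x : 'I_n -> R, x i0 = 1 - \sum_(i | i != i0) x i * beta i -> f.@[x] = 0) ->
  forall (A : comAlgType R) (a : 'I_n -> A),
  a i0 = 1 - \sum_(i | i != i0) a i * (beta i)%:A -> mmap (in_alg A) a f = 0.
Proof.
move=> f0 A a a_hyp.
have fT0 : f \mPo hyperplane_subst = 0.
  apply: (mpoly_eq0_of_meval nonroot) => v; rewrite comp_mpoly_meval; apply: f0.
  rewrite /meval mmap_hyperplane_subst eqxx; congr (1 - _).
  by apply: eq_bigr => i /negbTE i_neq0; rewrite mmap_hyperplane_subst i_neq0.
have := congr1 (mmap (in_alg A) a) fT0; rewrite mmap_comp_mpoly mmap0 => <-.
by apply: mmap_eq => i; rewrite mmap_hyperplane_subst; case: eqP => [-> |].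
Qed.

End Hyperplane.

Lemma pFrobenius_aut_sum_comm (R : nzRingType) (p : nat) (hp : p \in [pchar R])
    (I : Type) (r : seq I) (f : I -> R) :
  (forall i j, GRing.comm (f i) (f j)) ->
  pFrobenius_aut hp (\sum_(i <- r) f i) = \sum_(i <- r) pFrobenius_aut hp (f i).
Proof.
move=> fC; elim: r => [|i r IH]; first by rewrite !big_nil pFrobenius_aut0.
rewrite !big_cons pFrobenius_autD_comm ?IH //.
by apply: commr_sum => j _; apply: fC.
Qed.

Lemma expr_pchar_sum_comm (R : nzRingType) (p : nat) (hp : p \in [pchar R])
    (I : Type) (r : seq I) (f : I -> R) (e : nat) :
  (forall i j, GRing.comm (f i) (f j)) ->
  (\sum_(i <- r) f i) ^+ (p ^ e) = \sum_(i <- r) f i ^+ (p ^ e).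
Proof.
elim: e f => [|e IH] f fC.
  by rewrite expn0 expr1; apply: eq_bigr => i _; rewrite expr1.
rewrite expnSr exprM IH // -pFrobenius_autE pFrobenius_aut_sum_comm.
  by apply: eq_bigr => i _; rewrite pFrobenius_autE -exprM.
by move=> i j; apply/commrX/commr_sym/commrX/commr_sym.
Qed.

Lemma unitr_of_nilpotent_sub1 (R : unitRingType) (x : R) (e : nat) :
  (x - 1) ^+ e = 0 -> x \is a GRing.unit.
Proof.
move=> nil_x; set y := 1 - x; pose s := \sum_(k < e) y ^+ k.
have ye : y ^+ e = 0 by rewrite /y -opprB exprNn nil_x mulr0.
have xs : x * s = 1.
  have := subrX1 y e; rewrite -/s ye sub0r /y addrAC subrr add0r mulNr.
  by move/oppr_inj.
have cxs : GRing.comm x s.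
  by apply: commr_sum => k _; apply/commrX/commrB; [apply: commr1 | apply: commr_refl].
by apply/unitrP; exists s; rewrite -cxs.
Qed.

Lemma uniform_pexp_in_image (F : fieldType) (L : nzRingType)
    (iota : {rmorphism F -> L}) (p : nat) (I : finType) (x : I -> L) :
  (forall i, exists e y, x i ^+ (p ^ e) = iota y) ->
  exists e, forall i, exists y, x i ^+ (p ^ e) = iota y.
Proof.
move=> /fin_all_exists[e eP]; exists (\max_i e i) => i.
have [y hy] := eP i; exists (y ^+ (p ^ (\max_i e i - e i))).
by rewrite -{1}(subnKC (leq_bigmax i)) expnD exprM hy rmorphXn.
Qed.

Section RegularRepresentation.
Variables (F : fieldType) (L : closedFieldType) (iota : {rmorphism F -> L}).
Variables (n : nat) (alpha : 'I_n.+1 -> L) (c : 'I_n.+1 -> 'I_n.+1 -> 'I_n.+1 -> F).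
Hypothesis hfree : alpha_free iota alpha.
Hypothesis hconst : struct_consts iota alpha c.

Definition alpha_row : 'rV[L]_n.+1 := \row_j alpha j.

(* [b] is the matrix over [F] of multiplication by [x] on [k'], in the basis [alpha]. *)
Definition is_regmx (x : L) (b : 'M[F]_n.+1) : Prop :=
  alpha_row *m map_mx iota b = x *: alpha_row.

Definition struct_mx (i : 'I_n.+1) : 'M[F]_n.+1 := \matrix_(l, j) c i j l.

Lemma is_regmx_inj x b b' : is_regmx x b -> is_regmx x b' -> b = b'.
Proof.
move=> hb hb'; apply/matrixP => l j; apply/eqP; rewrite -subr_eq0; apply/eqP.
have : alpha_row *m map_mx iota (b - b') = 0 by rewrite map_mxB mulmxBr hb hb' subrr.
move=> /rowP/(_ j); rewrite !mxE => sum0.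
apply: (@hfree (fun l => b l j - b' l j)).
by rewrite -[RHS]sum0; apply: eq_bigr => i _; rewrite !mxE mulrC.
Qed.

Lemma is_regmxM x y b b' : is_regmx x b -> is_regmx y b' -> is_regmx (x * y) (b *m b').
Proof.
by move=> hb hb'; rewrite /is_regmx map_mxM mulmxA hb -scalemxAl hb' scalerA mulrC.
Qed.

Lemma is_regmx_scalar (y : F) : is_regmx (iota y) y%:M.
Proof. by rewrite /is_regmx map_scalar_mx mul_mx_scalar. Qed.

Lemma is_regmxX x b k : is_regmx x b -> is_regmx (x ^+ k) (b ^+ k).
Proof.
move=> hb; elim: k => [|k IH].
  by rewrite !expr0 -(rmorph1 iota); apply: is_regmx_scalar.
by rewrite !exprSr -mulmxE; apply: is_regmxM.
Qed.

Lemma is_regmx_struct i : is_regmx (alpha i) (struct_mx i).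
Proof.
apply/rowP => j; rewrite !mxE hconst; apply: eq_bigr => l _.
by rewrite !mxE mulrC.
Qed.

Lemma struct_mxC i j : GRing.comm (struct_mx i) (struct_mx j).
Proof.
rewrite /GRing.comm -!mulmxE; apply: (@is_regmx_inj (alpha i * alpha j)).
  exact: is_regmxM (is_regmx_struct i) (is_regmx_struct j).
by rewrite mulrC; exact: is_regmxM (is_regmx_struct j) (is_regmx_struct i).
Qed.

Lemma struct_mx_unit i : alpha i = 1 -> struct_mx i = 1.
Proof.
move=> alpha1; apply: (@is_regmx_inj 1); first by rewrite -alpha1; apply: is_regmx_struct.
by rewrite -(rmorph1 iota); apply: is_regmx_scalar.
Qed.

Lemma struct_mxX i k y : alpha i ^+ k = iota y -> struct_mx i ^+ k = y%:M.
Proof.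
move=> hy; apply: (@is_regmx_inj (iota y)); last exact: is_regmx_scalar.
by rewrite -hy; apply/is_regmxX/is_regmx_struct.
Qed.

Lemma mulmx_ofE x : mulmx_of iota c x = \sum_i x i *: map_mx iota (struct_mx i).
Proof.
apply/matrixP => l j; rewrite !mxE summxE; apply: eq_bigr => i _.
by rewrite !mxE.
Qed.

Lemma alpha_row_mulmx_of x :
  alpha_row *m mulmx_of iota c x = (\sum_i x i * alpha i) *: alpha_row.
Proof.
rewrite mulmx_ofE mulmx_sumr scaler_suml; apply: eq_bigr => i _.
by rewrite -scalemxAr is_regmx_struct scalerA.
Qed.

Variables (i0 : 'I_n.+1) (p : nat).
Hypothesis alpha_i0 : alpha i0 = 1.
Hypothesis hchar : p \in [pchar F].
Hypothesis hinsep : purely_insep iota alpha p.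

Lemma sum_alpha_of_unipotent x : unipotent_pt iota c x -> \sum_i x i * alpha i = 1.
Proof.
move=> [m nil_x]; set s := \sum_i _.
have eigen k : alpha_row *m (mulmx_of iota c x - 1%:M) ^+ k = (s - 1) ^+ k *: alpha_row.
  elim: k => [|k IH]; first by rewrite !expr0 scale1r mulmx1.
  rewrite exprSr -mulmxE mulmxA IH -scalemxAl mulmxBr alpha_row_mulmx_of mulmx1.
  by rewrite -{2}(scale1r alpha_row) -scalerBl scalerA -exprSr.
have := eigen m; rewrite nil_x mulmx0 => /rowP/(_ i0); rewrite !mxE alpha_i0 mulr1.
by move/esym/eqP; rewrite expf_eq0 subr_eq0 => /andP[_ /eqP].
Qed.

Lemma C_pts_of_unitmx x :
  mulmx_of iota c x \in unitmx -> C_pts (A := L^o) iota c i0 x.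
Proof.
move=> x_unit; exists (fun j => invmx (mulmx_of iota c x) j i0).
apply: functional_extensionality => l.
transitivity ((1%:M : 'M[L]_n.+1) l i0); last by rewrite mxE /tone; case: (l == i0).
rewrite -(mulmxV x_unit) mxE /tmul exchange_big /=; apply: eq_bigr => j _.
rewrite !mxE mulr_suml; apply: eq_bigr => i _.
by rewrite [_%:A]mulr1 mulrAC.
Qed.

Lemma alpha_in_kprime i : in_kprime iota alpha (alpha i).
Proof.
exists (fun k => (k == i)%:R); rewrite (bigD1 i) //= eqxx rmorph1 mul1r big1 ?addr0 //.
by move=> k /negbTE ->; rewrite rmorph0 mul0r.
Qed.

Lemma nilpotent_of_sum_alpha x :
  \sum_i x i * alpha i = 1 -> exists e, (mulmx_of iota c x - 1%:M) ^+ (p ^ e) = 0.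
Proof.
move=> sum_x; have hpL : p \in [pchar L] := rmorph_pchar iota hchar.
have hpM : p \in [pchar 'M[L]_n.+1] by rewrite pchar_lalg.
have [e alpha_pexp] := uniform_pexp_in_image (fun i => hinsep (alpha_in_kprime i)).
pose d i := x i - (i == i0)%:R.
have sum_d : \sum_i d i * alpha i = 0.
  under eq_bigr do rewrite mulrBl; rewrite sumrB sum_x (bigD1 i0) //= eqxx mul1r alpha_i0.
  by rewrite big1 ?addr0 ?subrr // => i /negbTE ->; rewrite mul0r.
have -> : mulmx_of iota c x - 1%:M = \sum_i d i *: map_mx iota (struct_mx i).
  rewrite mulmx_ofE; under [RHS]eq_bigr do rewrite scalerBl; rewrite sumrB; congr (_ - _).
  rewrite (bigD1 i0) //= eqxx scale1r struct_mx_unit // map_mx1 big1 ?addr0 //.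
  by move=> i /negbTE ->; rewrite scale0r.
exists e; rewrite (expr_pchar_sum_comm hpM); last first.
  move=> i j; rewrite /GRing.comm -!scalerAl -!scalerAr !scalerA mulrC.
  by rewrite -!mulmxE -!map_mxM !mulmxE struct_mxC.
have -> : \sum_i (d i *: map_mx iota (struct_mx i)) ^+ (p ^ e)
    = ((\sum_i d i * alpha i) ^+ (p ^ e))%:M.
  rewrite (expr_pchar_sum_comm hpL); last by move=> i j; apply: mulrC.
  rewrite raddf_sum; apply: eq_bigr => i _; have [y hy] := alpha_pexp i.
  by rewrite exprZn -rmorphXn /= (struct_mxX hy) map_scalar_mx scale_scalar_mx exprMn hy.
by rewrite sum_d expr0n eqn0Ngt expn_gt0 (prime_gt0 (pcharf_prime hchar)) raddf0.
Qed.

End RegularRepresentation.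

Theorem lemma5p3
  (F : fieldType) (p : nat) (hp : prime p) (hchar : p \in [pchar F])
  (L : closedFieldType) (iota : {rmorphism F -> L})
  (halg : algebraic_over iota)
  (q : nat) (hq : (0 < q)%N) (alpha : 'I_q -> L)
  (c : 'I_q -> 'I_q -> 'I_q -> F)
  (h1 : alpha (Ordinal hq) = 1)
  (hfree : alpha_free iota alpha)
  (hconst : struct_consts iota alpha c)
  (hinv : forall x, in_kprime iota alpha x -> in_kprime iota alpha x^-1)
  (hinsep : purely_insep iota alpha p)
  (A : comAlgType L) (a : 'I_q -> A)
  (ha : C_pts iota c (Ordinal hq) a) :
  U_pts iota c (Ordinal hq) a <->
  a (Ordinal hq) = 1 - \sum_(i | i != Ordinal hq) a i * (alpha i)%:A.
Proof.
case: q hq alpha c h1 hfree hconst hinv hinsep a ha => [//|n].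
move=> hq alpha c h1 hfree hconst _ hinsep a ha.
set i0 := Ordinal hq.
have alphaA1 : (alpha i0)%:A = 1 :> A by rewrite h1 scale1r.
split=> [[_ a_U] | a_hyp].
  apply/(hyperplane_pivotE _ alphaA1).
  pose lin : {mpoly L[n.+1]} := \sum_i 'X_i * (alpha i)%:MP - 1.
  have : mmap (in_alg A) a lin = 0.
    apply: a_U => x _ /(sum_alpha_of_unipotent hconst h1).
    by rewrite /lin /meval rmorphB rmorph1 /= mmap_sum_XC => ->; rewrite subrr.
  by rewrite /lin rmorphB rmorph1 /= mmap_sum_XC => /eqP; rewrite subr_eq0 => /eqP.
split=> // f f_U; apply: (mmap_eq0_on_hyperplane (fun Q => elimT (closed_nonrootP Q))).
  move=> x /(hyperplane_pivotE _ h1) sum_x.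
  have [e nil_x] := nilpotent_of_sum_alpha hfree hconst h1 hchar hinsep sum_x.
  apply: f_U; last by exists (p ^ e)%N.
  exact/C_pts_of_unitmx/(unitr_of_nilpotent_sub1 nil_x).
exact: a_hyp.
Qed.
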